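(* There is a universal constant $\beta>1$ such that the following holds. Let $k\ge1$ be an integer and $0<\gamma,\epsilon<1/2$, and put $r=\beta\cdot(1/\gamma)\cdot\log(k/\epsilon)$. Let $S_1,\dots,S_\ell\subseteq[n]$ be an $r$-spread sequence of $\ell\ge r^k$ sets, each of size $k$. Let $X$ be uniformly random in $[\ell]$, and, for a fixed integer $s$ with $\gamma n\le s\le n$, let $W$ be a uniformly random subset of $[n]$ of size $s$, independent of $X$. Then $\mathbb{E}[|\chi(X,W)|]<\epsilon$. In particular, $\Pr_W[\exists y\in[\ell]:\ S_y\subseteq W]>1-\epsilon$.
   Context: A sequence (repetitions allowed) of sets $S_1,\dots,S_\ell\subseteq[n]$, each of size $k$, is called $r$-spread if for every non-empty set $Z\subseteq[n]$, the number of indices $i\in[\ell]$ with $Z\subseteq S_i$ is at most $r^{k-|Z|}$. For $x\in[\ell]$ and $W\subseteq[n]$, $\chi(x,W)$ denotes $S_y\setminus W$, where $y\in[\ell]$ is chosen to minimize $|S_y\setminus W|$ among all $y$ with $S_y\subseteq S_x\cup W$, ties broken by taking the smallest such $y$. All logarithms are base $2$. *)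

From mathcomp Require Import all_boot.
From Stdlib Require Import Reals.
Set Implicit Arguments. Unset Strict Implicit. Unset Printing Implicit Defensive.

Definition log2 (x : R) : R := (ln x / ln 2)%R.

Definition uniform_k (n l k : nat) (S : 'I_l -> {set 'I_n}) : Prop :=
  forall i, #|S i| = k.

Definition spread (n l k : nat) (r : R) (S : 'I_l -> {set 'I_n}) : Prop :=
  forall Z : {set 'I_n}, Z != set0 ->
    (INR #|[set i | Z \subset S i]| <= r ^ (k - #|Z|))%R.

Definition is_best (n l : nat) (S : 'I_l -> {set 'I_n}) (x : 'I_l)
    (W : {set 'I_n}) (y : 'I_l) : bool :=
  (S y \subset S x :|: W) &&
  [forall z : 'I_l, (S z \subset S x :|: W) ==> (#|S y :\: W| <= #|S z :\: W|)].

(* The smallest such minimizer (enum 'I_l lists 0,1,...,l-1 in order);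
   x itself is a candidate, so such a y always exists. *)
Definition chi_idx (n l : nat) (S : 'I_l -> {set 'I_n}) (x : 'I_l)
    (W : {set 'I_n}) : 'I_l :=
  nth x (enum 'I_l) (find (is_best S x W) (enum 'I_l)).

Definition chi (n l : nat) (S : 'I_l -> {set 'I_n}) (x : 'I_l)
    (W : {set 'I_n}) : {set 'I_n} :=
  S (chi_idx S x W) :\: W.

Definition expected_chi (n l : nat) (S : 'I_l -> {set 'I_n}) (s : nat) : R :=
  (INR (\sum_(x : 'I_l) \sum_(W : {set 'I_n} | #|W| == s) #|chi S x W|)
   / (INR l * INR 'C(n, s)))%R.

Definition prob_covered (n l : nat) (S : 'I_l -> {set 'I_n}) (s : nat) : R :=
  (INR #|[set W : {set 'I_n} | (#|W| == s) && [exists y : 'I_l, S y \subset W]]|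
   / INR 'C(n, s))%R.

From mathcomp Require Import all_boot zify.
From Stdlib Require Import Reals Lra Lia.
(* Re-imported so that [^] on nat denotes [expn] again rather than Stdlib's [Nat.pow]. *)
From mathcomp Require Import ssrnat.
Set Implicit Arguments. Unset Strict Implicit. Unset Printing Implicit Defensive.

(* The random s-set W is revealed in R0 ~ 2 log(k/eps) rounds of d = s / R0 elements each.
   Write residue W x for |chi(x, W)| and p_t(b) for the probability that it is >= b when
   |W| = t.  Fix a round going from V (|V| = m) to W (|W| = t = m + d).  If the residue
   of x drops only to b' >= b although it was <= a for V, then (x, W) is encoded by
   (W u S_y, S_y \ W, x), where y is best for (x, W) among the sets with |S_y \ V| <= a:
   S_y \ W can be recovered from W u S_y up to a choice of b' elements among a, and by
   spreadness at most l / r^b' indices x have S_x containing it.  Counting the sets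
   W u S_y against the m-sets V with a binomial ratio bound gives
     p_t(b) <= p_m(a + 1) + p_m(1) * 2^a (n / (d r))^b.
   Taking a = 4b - 1 and iterating, p_{jd}(b) <= [4^j b <= k] + al^b * 2k / 2^j, so after
   R0 rounds p_s(1) < eps / k; as |chi| <= k, the expectation of |chi| is below eps. *)

Lemma card_le_sum_fibres (I J : finType) (A : {set I * J}) (M : I -> nat) :
  (forall i, #|[set j | (i, j) \in A]| <= M i) -> #|A| <= \sum_i M i.
Proof.
move=> leM; rewrite -sum1_card big_mkcond.
rewrite (eq_bigr (fun p => if (p.1, p.2) \in A then 1 else 0)); last by move=> [].
rewrite -(pair_bigA _ (fun i j => if (i, j) \in A then 1 else 0)) /=.
apply: leq_sum => i _; apply: leq_trans (leM i).
by rewrite -big_mkcond -sum1_card; apply: eq_leq; apply: eq_bigl => j; rewrite inE.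
Qed.

Lemma setUDDK (T : finType) (A B : {set T}) : (A :|: B) :\: (B :\: A) = A.
Proof. by apply/setP=> e; rewrite !inE; case: (e \in A); case: (e \in B). Qed.

Lemma cardsUD (T : finType) (A B : {set T}) : #|A :|: B| = #|A| + #|B :\: A|.
Proof.
rewrite -(cardsID A (A :|: B)) (setIidPr (subsetUl A B)); congr (_ + _).
by rewrite setDUl setDv set0U.
Qed.

Section Supersets.
Variable n : nat.

Definition supsets (V : {set 'I_n}) t := [set P : {set 'I_n} | (V \subset P) && (#|P| == t)].

Lemma card_supsets (V : {set 'I_n}) t :
  #|V| <= t -> #|supsets V t| = 'C(n - #|V|, t - #|V|).
Proof.
move=> Vt.
have QDV (Q : {set 'I_n}) : Q \subset ~: V -> Q :\: V = Q.
  by move=> QV; apply/setDidPl; rewrite disjoints_subset.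
have QVK (Q : {set 'I_n}) : Q \subset ~: V -> (Q :|: V) :\: V = Q.
  by move=> QV; rewrite setDUl setDv setU0 QDV.
have -> : supsets V t = (fun Q => Q :|: V) @:
    [set Q : {set 'I_n} | (Q \subset ~: V) && (#|Q| == t - #|V|)].
  apply/setP=> P; rewrite inE; apply/andP/imsetP.
    move=> [VP /eqP cardP]; exists (P :\: V).
      by rewrite inE subDset setUCr subsetT -cardP -(cardsID V P) (setIidPr VP) addKn /=.
    by apply/setP=> i; rewrite !inE; case: (boolP (i \in V)) => [/(subsetP VP)->|]; rewrite ?orbT ?orbF.
  move=> [Q]; rewrite inE => /andP[QV /eqP cardQ] ->; split; first exact: subsetUr.
  by rewrite setUC cardsUD QDV // cardQ subnKC.
rewrite card_in_imset; first by rewrite cards_draws cardsCs setCK card_ord.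
move=> Q1 Q2; rewrite !inE => /andP[Q1V _] /andP[Q2V _] eqQ.
by rewrite -(QVK _ Q1V) eqQ QVK.
Qed.

Lemma sum_subsets_supsets (t m : nat) (F : {set 'I_n} -> nat) :
  \sum_(W : {set 'I_n} | #|W| == t) 'C(t, m) * F W =
  \sum_(V : {set 'I_n} | #|V| == m) \sum_(W in supsets V t) F W.
Proof.
rewrite (exchange_big_dep (fun W : {set 'I_n} => #|W| == t)) /=; last first.
  by move=> V W _; rewrite inE => /andP[].
apply: eq_bigr => W /eqP cardW.
rewrite (eq_bigl (mem [set V : {set 'I_n} | (V \subset W) && (#|V| == m)])).
  by rewrite sum_nat_const cards_draws cardW.
by move=> V; rewrite !inE cardW eqxx andbT andbC.
Qed.

Lemma bin_mul_bin_sub t m : m <= t -> 'C(n, t) * 'C(t, m) = 'C(n, m) * 'C(n - m, t - m).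
Proof.
move=> le_mt; have := sum_subsets_supsets t m (fun _ => 1).
rewrite (eq_bigr (fun _ => 'C(t, m))); last by move=> W _; rewrite muln1.
rewrite (eq_bigl (mem [set W : {set 'I_n} | #|W| == t])); last by move=> W; rewrite !inE.
rewrite sum_nat_const card_draws card_ord => ->.
rewrite (eq_bigr (fun _ => 'C(n - m, t - m))); last first.
  by move=> V /eqP cardV; rewrite sum1_card card_supsets cardV.
rewrite (eq_bigl (mem [set V : {set 'I_n} | #|V| == m])); last by move=> V; rewrite !inE.
by rewrite sum_nat_const card_draws card_ord.
Qed.
End Supersets.

Lemma sum_bin_le_max (a : nat) (P : pred 'I_a.+1) (G : 'I_a.+1 -> nat) :
  \sum_(i < a.+1 | P i) 'C(a, i) * G i <= 2 ^ a * \max_(i < a.+1 | P i) G i.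
Proof.
apply: leq_trans (_ : \sum_(i < a.+1) 'C(a, i) * \max_(i < a.+1 | P i) G i <= _).
  rewrite big_mkcond; apply: leq_sum => i _; case: ifP => // Pi.
  by rewrite leq_mul2l (leq_bigmax_cond _ Pi) orbT.
rewrite -big_distrl /= leq_mul2r; apply/orP; right.
by rewrite -[2]/(1 + 1) expnDn; apply: eq_leq; apply: eq_bigr => i _; rewrite !exp1n !muln1.
Qed.

Section RealFacts.
Local Open Scope R_scope.

Lemma INR_muln (a b : nat) : INR (a * b) = INR a * INR b.
Proof. exact: mult_INR. Qed.

Lemma INR_addn (a b : nat) : INR (a + b) = INR a + INR b.
Proof. exact: plus_INR. Qed.

Lemma INR_leq (a b : nat) : (a <= b)%N -> INR a <= INR b.
Proof. by move/leP; apply: le_INR. Qed.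

Lemma INR_expn (a b : nat) : INR (a ^ b) = INR a ^ b.
Proof. by rewrite -pow_INR; congr INR; elim: b => // b IH; rewrite expnS IH. Qed.

Lemma INR_bin_gt0 (m p : nat) : (p <= m)%N -> 0 < INR 'C(m, p).
Proof. by move=> le_pm; apply: lt_0_INR; apply/ltP; rewrite bin_gt0. Qed.

Lemma INR_bigmax_le (I : finType) (P : pred I) (F : I -> nat) (B : R) :
  0 <= B -> (forall i, P i -> INR (F i) <= B) -> INR (\max_(i | P i) F i) <= B.
Proof.
move=> B_ge0 leFB; apply: (big_ind (fun m => INR m <= B)) => // x y Hx Hy.
by rewrite /maxn; case: ltnP.
Qed.

Lemma pow_le1_decr (x : R) (m p : nat) : 0 <= x <= 1 -> (m <= p)%N -> x ^ p <= x ^ m.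
Proof.
move=> x01 le_mp; rewrite -(subnKC le_mp) pow_add -{2}(Rmult_1_r (x ^ m)).
apply: Rmult_le_compat_l; first by apply: pow_le; lra.
by rewrite -(pow1 (p - m)); apply: pow_incr.
Qed.

Lemma Rdiv_pow (x y : R) (m : nat) : x ^ m / y ^ m = (x / y) ^ m.
Proof. by rewrite /Rdiv Rpow_mult_distr pow_inv. Qed.

Lemma Rdiv_le_cross (a b c e : R) : 0 < b -> 0 < e -> a * e <= c * b -> a / b <= c / e.
Proof.
move=> b_gt0 e_gt0 le_ae_cb; apply: (Rmult_le_reg_r (b * e)); first exact: Rmult_lt_0_compat.
have -> : a / b * (b * e) = a * e by field; lra.
by have -> : c / e * (b * e) = c * b by field; lra.
Qed.

(* 'C(N, m + 1) / 'C(N, m) = (N - m) / (m + 1) <= N / (d + 1) for m >= d. *)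
Lemma bin_shift_le (N d j : nat) :
  INR 'C(N, d + j) <= INR 'C(N, d) * (INR N / INR (d + 1)) ^ j.
Proof.
elim: j => [|j IH]; first by rewrite addn0 /=; lra.
set q := INR N / INR (d + 1).
have d1_gt0 : 0 < INR (d + 1) by apply: lt_0_INR; apply/ltP; rewrite addn1.
have q_ge0 : 0 <= q by apply: Rle_mult_inv_pos => //; apply: pos_INR.
have Cdj_ge0 := pos_INR 'C(N, d + j).
have step : INR (d + 1) * INR 'C(N, (d + j).+1) <= INR N * INR 'C(N, d + j).
  apply: Rle_trans (_ : INR (d + j).+1 * INR 'C(N, (d + j).+1) <= _).
    by apply: Rmult_le_compat_r; [apply: pos_INR | apply: INR_leq; lia].
  rewrite -!INR_muln mul_bin_left !INR_muln.
  by apply: Rmult_le_compat_r => //; apply: INR_leq; apply: leq_subr.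
have step_q : INR 'C(N, (d + j).+1) <= q * INR 'C(N, d + j).
  apply: (Rmult_le_reg_l (INR (d + 1))) => //.
  by have -> : INR (d + 1) * (q * INR 'C(N, d + j)) = INR N * INR 'C(N, d + j)
    by rewrite /q; field; lra.
rewrite addnS /=; apply: Rle_trans step_q _.
by apply: Rle_trans (Rmult_le_compat_l q _ _ q_ge0 IH) _; right; rewrite /q; ring.
Qed.

Lemma exists_nat_between (x : R) : 0 < x -> exists m : nat, x < INR m <= x + 1.
Proof.
move=> x_gt0; have [up_gt up_le] := archimed x.
exists (Z.to_nat (up x)).
have up_ge0 : (0 <= up x)%Z by apply: le_IZR; lra.
rewrite INR_IZR_INZ Znat.Z2Nat.id //; lra.
Qed.

(* The inductive step of the iteration, with [A = al ^ b], [c = 2k / 2^j] and the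
   indicator [I1] of [4^j <= k]. *)
Lemma round_arith (A al c w I1 I4 : R) :
  0 <= al <= 1/2 -> 0 <= A <= al -> 0 <= c -> 0 <= w <= A / 4 ->
  (I1 = 0 \/ (I1 = 1 /\ 2 <= c)) ->
  I4 + A ^ 4 * c + (I1 + al * c) * w <= I4 + A * c / 2.
Proof.
move=> al01 A01 c_ge0 w01 I1_cases.
have A4_le : A ^ 4 <= A / 8.
  have A3_le : A ^ 3 <= (1/2) ^ 3 by apply: pow_incr; lra.
  have A3_ge0 : 0 <= A ^ 3 by apply: pow_le; lra.
  have -> : A ^ 4 = A * A ^ 3 by ring.
  rewrite /= in A3_le; nra.
have alw_le : al * w <= A / 8 by nra.
have Ac_ge0 : 0 <= A * c by nra.
have I1w_le : I1 * w <= A * c / 8 by case: I1_cases => [-> | [-> c_ge2]]; nra.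
nra.
Qed.

Lemma half_pow_ge2 (k j : nat) : (4 ^ j <= k)%N -> 2 <= 2 * INR k / 2 ^ j.
Proof.
move=> /INR_leq; rewrite INR_expn => le_4j_k.
have pow2_gt0 : 0 < 2 ^ j by apply: pow_lt; lra.
have pow2_ge1 : 1 <= 2 ^ j by rewrite -(pow1 j); apply: pow_incr; lra.
rewrite (_ : INR 4 ^ j = 2 ^ j * 2 ^ j) in le_4j_k; last first.
  by rewrite -Rpow_mult_distr /=; congr (_ ^ _); ring.
apply: (Rmult_le_reg_r (2 ^ j)) => //.
rewrite /Rdiv Rmult_assoc Rinv_l; nra.
Qed.

Lemma round_weight_le (lam al : R) (b : nat) : 0 <= lam <= al / 64 -> (0 < b)%N ->
  2 ^ (4 * b).-1 * lam ^ b <= al ^ b / 4.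
Proof.
move=> lam01 b_gt0; apply: Rle_trans (_ : 2 ^ (4 * b) * lam ^ b <= _).
  apply: Rmult_le_compat_r; first by apply: pow_le; lra.
  by apply: Rle_pow; [lra | apply/leP; apply: leq_pred].
apply: Rle_trans (_ : (al / 4) ^ b <= _).
  by rewrite pow_mult -Rpow_mult_distr; apply: pow_incr; simpl; lra.
rewrite -Rdiv_pow; apply: Rmult_le_compat_l; first by apply: pow_le; lra.
apply: Rinv_le_contravar; first lra.
by rewrite -{1}(pow_1 4); apply: Rle_pow; [lra | apply/leP].
Qed.
End RealFacts.

Section Residues.
Variables (n l k : nat) (S : 'I_l -> {set 'I_n}).
Hypothesis S_card : forall i, #|S i| = k.

Definition admissible x (V : {set 'I_n}) z := S z \subset S x :|: V.

Definition best (V : {set 'I_n}) x := [arg min_(z < x | admissible x V z) #|S z :\: V|].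

Definition residue (V : {set 'I_n}) x := #|S (best V x) :\: V|.

Definition covered (V : {set 'I_n}) := [exists z, S z \subset V].

Lemma bestP (V : {set 'I_n}) x :
  admissible x V (best V x) /\ forall z, admissible x V z -> residue V x <= #|S z :\: V|.
Proof. by rewrite /residue /best; case: arg_minnP => [|y]; [exact: subsetUl | split]. Qed.

Lemma residue_eq0 (V : {set 'I_n}) x : (residue V x == 0) = covered V.
Proof.
have [adm_best le_best] := bestP V x.
apply/idP/existsP => [|[z SzV]]; first by rewrite cards_eq0 setD_eq0; exists (best V x).
have /le_best : admissible x V z by apply: subset_trans SzV (subsetUr _ _).
by move: SzV; rewrite -setD_eq0 => /eqP->; rewrite cards0 leqn0.
Qed.

Lemma residue_subset (V W : {set 'I_n}) x : V \subset W -> residue W x <= residue V x.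
Proof.
move=> VW; have [adm_best _] := bestP V x; have [_ le_best] := bestP W x.
apply: leq_trans (le_best _ _) _; first by apply: subset_trans adm_best (setUS _ VW).
by apply: subset_leq_card; apply: setDS.
Qed.

Lemma residue_le (V : {set 'I_n}) x : residue V x <= k.
Proof.
have [_ le_best] := bestP V x; rewrite -(S_card x).
by apply: leq_trans (le_best x (subsetUl _ _)) _; apply: subset_leq_card; apply: subsetDl.
Qed.

Lemma chi_idx_is_best x (W : {set 'I_n}) : is_best S x W (chi_idx S x W).
Proof.
have [adm_best le_best] := bestP W x.
apply: nth_find; apply/hasP; exists (best W x); first by rewrite mem_enum.
by apply/andP; split => //; apply/forallP => z; apply/implyP; apply: le_best.
Qed.

Lemma card_chi_le x (W : {set 'I_n}) : #|chi S x W| <= k * (0 < residue W x).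
Proof.
have /andP[_ /forallP le_chi] := chi_idx_is_best x W.
case: (posnP (residue W x)) => [/eqP|_]; last first.
  by rewrite muln1 -(S_card (chi_idx S x W)); apply: subset_leq_card; apply: subsetDl.
rewrite residue_eq0 => /existsP[z SzW]; rewrite muln0 leqn0 /chi.
have := le_chi z; rewrite (subset_trans SzW (subsetUr _ _)) /=.
by move: SzW; rewrite -setD_eq0 => /eqP->; rewrite cards0 leqn0.
Qed.

Definition bad_count t b := \sum_(W : {set 'I_n} | #|W| == t) #|[set x | b <= residue W x]|.

Lemma bad_count_le t b : bad_count t b <= 'C(n, t) * l.
Proof.
rewrite /bad_count -[X in 'C(X, _)](card_ord n) -card_draws -sum_nat_const.
apply: leq_trans (_ : \sum_(W : {set 'I_n} | #|W| == t) l <= _).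
  by apply: leq_sum => W _; rewrite -[X in _ <= X](card_ord l) max_card.
by apply: eq_leq; apply: eq_bigl => W; rewrite inE.
Qed.

Lemma bad_count_gt t b : k < b -> bad_count t b = 0.
Proof.
move=> lt_kb; rewrite /bad_count big1 // => W _; apply/eqP; rewrite cards_eq0.
by apply/eqP/setP=> x; rewrite !inE leqNgt (leq_ltn_trans (residue_le W x) lt_kb).
Qed.

Lemma bad_count1 t : bad_count t 1 = l * #|[set W : {set 'I_n} | (#|W| == t) && ~~ covered W]|.
Proof.
rewrite /bad_count mulnC -sum_nat_const big_mkcond [RHS]big_mkcond.
apply: eq_bigr => W _; rewrite inE; case: (#|W| == t) => //=.
case: (boolP (covered W)) => covW /=.
  by apply/eqP; rewrite cards_eq0; apply/eqP/setP=> x; rewrite !inE lt0n residue_eq0 covW.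
by rewrite -[RHS](card_ord l); apply: eq_card => x; rewrite !inE lt0n residue_eq0 covW.
Qed.

Lemma sum_card_chi t :
  \sum_(x : 'I_l) \sum_(W : {set 'I_n} | #|W| == t) #|chi S x W| <= k * bad_count t 1.
Proof.
rewrite exchange_big /= /bad_count big_distrr /=; apply: leq_sum => W _.
apply: leq_trans (_ : \sum_(x : 'I_l) k * (0 < residue W x) <= _).
  by apply: leq_sum => x _; apply: card_chi_le.
rewrite -big_distrr /= leq_mul2l -sum1_card [X in _ <= X]big_mkcond /=.
by apply/orP; right; apply: eq_leq; apply: eq_bigr => x _; rewrite inE; case: (0 < _).
Qed.

Lemma card_covered_uncovered t :
  #|[set W : {set 'I_n} | (#|W| == t) && [exists y, S y \subset W]]| +
  #|[set W : {set 'I_n} | (#|W| == t) && ~~ covered W]| = 'C(n, t).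
Proof.
rewrite -[X in 'C(X, _)](card_ord n) -card_draws.
rewrite -(cardsID [set W : {set 'I_n} | covered W] [set A : {set 'I_n} | #|A| == t]).
by congr (_ + _); apply: eq_card => W; rewrite !inE andbC.
Qed.

Definition restricted_best a (V W : {set 'I_n}) x :=
  [arg min_(z < best V x | (S z \subset S x :|: W) && (#|S z :\: V| <= a)) #|S z :\: W|].

Lemma restricted_bestP a (V W : {set 'I_n}) x : V \subset W -> residue V x <= a ->
  let y := restricted_best a V W x in
  [/\ S y \subset S x :|: W, #|S y :\: V| <= a &
   forall z, S z \subset S x :|: W -> #|S z :\: V| <= a -> #|S y :\: W| <= #|S z :\: W|].
Proof.
move=> VW le_a; have [adm_best _] := bestP V x.
rewrite /restricted_best; case: arg_minnP => [|y /andP[Sy1 Sy2] min_y].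
  by rewrite le_a andbT; apply: subset_trans adm_best (setUS _ VW).
by split => // z Sz1 Sz2; apply: min_y; rewrite Sz1.
Qed.

(* Depends on (V, P) only, so that it can be recomputed from a code in [card_bad_pairs_residue]. *)
Definition small_residue a (V P : {set 'I_n}) : {set 'I_n} :=
  if [pick z | (S z \subset P) && (#|S z :\: V| <= a)] is Some z then S z :\: V else set0.

Lemma card_small_residue a (V P : {set 'I_n}) : #|small_residue a V P| <= a.
Proof. by rewrite /small_residue; case: pickP => [z /andP[_ ->] | _] //; rewrite cards0. Qed.

Definition max_degree b := \max_(Z : {set 'I_n} | #|Z| == b) #|[set x | Z \subset S x]|.

Definition bad_pairs (V : {set 'I_n}) t a b := [set p : 'I_l * {set 'I_n} |
  [&& V \subset p.2, #|p.2| == t, residue V p.1 <= a & b <= residue p.2 p.1]].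

Lemma sum_card_bad_pairs (V : {set 'I_n}) t a b :
  \sum_(W in supsets V t) #|[set x | (residue V x <= a) && (b <= residue W x)]| =
  #|bad_pairs V t a b|.
Proof.
rewrite -[RHS]sum1_card [RHS]big_mkcond.
rewrite (eq_bigr (fun p => if (p.1, p.2) \in bad_pairs V t a b then 1 else 0)); last by move=> [].
rewrite -(pair_bigA _ (fun i j => if (i, j) \in bad_pairs V t a b then 1 else 0)) /=.
rewrite exchange_big /= big_mkcond; apply: eq_bigr => W _.
rewrite -big_mkcond /= -sum1_card inE; case: (boolP (_ && _)) => [/andP[VW tW]|VWt].
  by apply: eq_bigl => x; rewrite !inE /= VW tW.
by rewrite big_pred0 // => x; rewrite !inE /=; case: (V \subset W) (#|W| == t) VWt => [] [].
Qed.

Lemma restricted_residue_bounds (V : {set 'I_n}) t a b p : p \in bad_pairs V t a b ->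
  b <= #|S (restricted_best a V p.2 p.1) :\: p.2| <= a.
Proof.
case: p => x W; rewrite inE /= => /and4P[VW _ le_a le_b].
have [Sy1 Sy2 _] := restricted_bestP VW le_a; have [_ le_best] := bestP W x.
rewrite (leq_trans le_b (le_best _ Sy1)) /=.
by apply: leq_trans Sy2; apply: subset_leq_card; apply: setDS.
Qed.

Definition encoding a V (p : 'I_l * {set 'I_n}) :=
  let y := restricted_best a V p.2 p.1 in (p.2 :|: S y, S y :\: p.2, p.1).

(* The code (P, c, x) determines (x, W) as W = P \ c; the point is that c is
   recovered from P alone up to a subset of size <= a of [small_residue a V P]. *)
Lemma encoding_spec a (V : {set 'I_n}) t b x W : (x, W) \in bad_pairs V t a b ->
  let y := restricted_best a V W x in
  [/\ W :|: S y \in supsets V (t + #|S y :\: W|),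
       S y :\: W \subset small_residue a V (W :|: S y) & S y :\: W \subset S x].
Proof.
rewrite inE /= => /and4P[VW /eqP tW le_a _].
have [Sy_adm Sy_small Sy_min] := restricted_bestP VW le_a.
set y := restricted_best a V W x in Sy_adm Sy_small Sy_min *.
have chi_Sx : S y :\: W \subset S x.
  apply/subsetP=> i; rewrite inE => /andP[iW iy].
  by move: (subsetP Sy_adm i iy); rewrite inE (negbTE iW) orbF.
split => //; first by rewrite inE cardsUD tW eqxx (subset_trans VW (subsetUl _ _)).
rewrite /small_residue; case: pickP => [z /andP[Sz_sub Sz_small] | none]; last first.
  by move: (none y); rewrite subsetUr Sy_small.
have Sz_adm : S z \subset S x :|: W.
  apply: subset_trans Sz_sub _; apply/subsetP=> i; rewrite !inE.
  by case/orP=> [->|/(subsetP Sy_adm)]; rewrite ?orbT // inE.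
have Sz_W : S z :\: W \subset S y :\: W.
  apply/subsetP=> i; rewrite !inE => /andP[iW iz]; rewrite iW.
  by move: (subsetP Sz_sub i iz); rewrite inE (negbTE iW).
have -> : S y :\: W = S z :\: W.
  by apply/eqP; rewrite eq_sym eqEcard Sz_W Sy_min.
exact: setDS.
Qed.

Lemma card_bad_pairs_residue (V : {set 'I_n}) t a b b' :
  #|[set p in bad_pairs V t a b | #|S (restricted_best a V p.2 p.1) :\: p.2| == b']|
   <= #|supsets V (t + b')| * 'C(a, b') * max_degree b'.
Proof.
set D := [set p in _ | _].
pose codes := [set e : {set 'I_n} * {set 'I_n} * 'I_l | [&& e.1.1 \in supsets V (t + b'),
   e.1.2 \subset small_residue a V e.1.1, #|e.1.2| == b' & e.1.2 \subset S e.2]].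
have inj : {in D &, injective (encoding a V)}.
  move=> [x1 W1] [x2 W2] _ _ [E1 E2 ->].
  by rewrite -(setUDDK W1 (S (restricted_best a V W1 x1))) E1 E2 setUDDK.
have sub : encoding a V @: D \subset codes.
  apply/subsetP=> e /imsetP[[x W]]; rewrite inE => /andP[bad /eqP card_c] ->.
  by have := encoding_spec bad; rewrite inE /= card_c => -[-> -> ->]; rewrite eqxx.
rewrite -(card_in_imset inj); apply: leq_trans (subset_leq_card sub) _.
pose good (e : {set 'I_n} * {set 'I_n}) :=
  [&& e.1 \in supsets V (t + b'), e.2 \subset small_residue a V e.1 & #|e.2| == b'].
apply: leq_trans (card_le_sum_fibres (M := fun e => if good e then max_degree b' else 0) _) _.
  move=> [P c]; rewrite /good /=; case: ifP => [/and3P[P_sup c_sub /eqP c_card] | bad_e].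
    apply: leq_trans (_ : #|[set x | c \subset S x]| <= _).
      by apply: subset_leq_card; apply/subsetP=> x; rewrite !inE => /and4P[].
    apply: (@leq_bigmax_cond _ (fun Z : {set 'I_n} => #|Z| == b')
              (fun Z => #|[set x | Z \subset S x]|) c).
    by rewrite c_card.
  rewrite leqn0 cards_eq0; apply/eqP/setP=> x; rewrite !inE /=.
  by apply/negbTE; apply: contraFN bad_e => /and4P[h1 h2 h3 _]; rewrite inE h1 h2 h3.
rewrite -big_mkcond /= sum_nat_const leq_mul2r; apply/orP; right.
rewrite (eq_card (B := [set e | good e])); last by move=> e; rewrite inE.
apply: leq_trans (card_le_sum_fibres
  (M := fun P => if P \in supsets V (t + b') then 'C(a, b') else 0) _) _.
  move=> P; case: ifP => P_sup.
    apply: leq_trans (_ : #|[set c : {set 'I_n} | (c \subset small_residue a V P) && (#|c| == b')]| <= _).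
      by apply: subset_leq_card; apply/subsetP=> c; rewrite !inE /good /= P_sup.
    by rewrite cards_draws leq_bin2l // card_small_residue.
  by rewrite leqn0 cards_eq0; apply/eqP/setP=> c; rewrite !inE /good /= P_sup.
by rewrite -big_mkcond /= sum_nat_const.
Qed.

Lemma card_bad_pairs (V : {set 'I_n}) t a b :
  #|bad_pairs V t a b| <=
  \sum_(b' < a.+1 | b <= b') #|supsets V (t + b')| * 'C(a, b') * max_degree b'.
Proof.
pose level p := inord #|S (restricted_best a V p.2 p.1) :\: p.2| : 'I_a.+1.
rewrite -sum1_card (partition_big level (fun j : 'I_a.+1 => b <= j)) /=; last first.
  by move=> p /restricted_residue_bounds /andP[le_b le_a]; rewrite inordK.
apply: leq_sum => j _; apply: leq_trans (card_bad_pairs_residue V t a b j).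
rewrite -sum1_card; apply: eq_leq; apply: eq_bigl => p; rewrite [in RHS]inE.
case: (boolP (p \in bad_pairs V t a b)) => //= /restricted_residue_bounds /andP[_ le_a].
by rewrite -(inj_eq val_inj) /= inordK.
Qed.

(* Double count over V ⊆ W with |V| = m: pairs (W, x) whose residue w.r.t. V exceeds a
   are charged to [bad_count m a.+1], the others to the encoding of [card_bad_pairs]. *)
Lemma bad_count_round (m t a b : nat) : 0 < b -> m <= t ->
  l * 'C(t, m) * bad_count t b <=
  l * 'C(n - m, t - m) * bad_count m a.+1 +
  bad_count m 1 * \sum_(b' < a.+1 | b <= b') 'C(n - m, t + b' - m) * 'C(a, b') * max_degree b'.
Proof.
move=> b_gt0 le_mt.
set X := \sum_(b' < a.+1 | b <= b') _.
rewrite -mulnA /bad_count big_distrr /= sum_subsets_supsets.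
rewrite [X in X <= _]big_distrr [X in _ <= X + _]big_distrr [X in _ <= _ + X]big_distrl -big_split /=.
apply: leq_sum => V /eqP cardV.
have split_bad W : #|[set x | b <= residue W x]| <=
    #|[set x | a < residue V x]| + #|[set x | (residue V x <= a) && (b <= residue W x)]|.
  apply: leq_trans (leq_card_setU _ _).1; apply: subset_leq_card; apply/subsetP=> x.
  by rewrite !inE; case: ltnP => //= _ ->.
have sum_split : \sum_(W in supsets V t) #|[set x | b <= residue W x]| <=
    \sum_(W in supsets V t) (#|[set x | a < residue V x]| +
                              #|[set x | (residue V x <= a) && (b <= residue W x)]|).
  by apply: leq_sum => W _; apply: split_bad.
apply: leq_trans (leq_mul (leqnn l) sum_split) _.
rewrite big_split /= sum_nat_const sum_card_bad_pairs mulnDr card_supsets cardV // mulnA leq_add2l.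
case: (boolP (covered V)) => covV.
  rewrite (_ : #|bad_pairs V t a b| = 0) ?muln0 //.
  apply/eqP; rewrite cards_eq0; apply/eqP/setP => [[x W]]; rewrite !inE /=.
  apply/negbTE/negP => /and4P[VW _ _ le_b].
  have /eqP res0 : residue V x == 0 by rewrite residue_eq0.
  by have := leq_trans b_gt0 (leq_trans le_b (residue_subset x VW)); rewrite res0.
rewrite (_ : #|[set x | 0 < residue V x]| = l); last first.
  by rewrite -[RHS](card_ord l); apply: eq_card => x; rewrite !inE lt0n residue_eq0 (negbTE covV).
rewrite leq_mul2l; apply/orP; right; apply: leq_trans (card_bad_pairs V t a b) _.
by apply: eq_leq; apply: eq_bigr => b' _; rewrite card_supsets cardV ?(leq_trans le_mt (leq_addr _ _)).
Qed.

Section Probabilities.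
Local Open Scope R_scope.

Definition bad_prob t b := INR (bad_count t b) / (INR l * INR 'C(n, t)).

Lemma bad_prob_denom_gt0 t : (0 < l)%N -> (t <= n)%N -> 0 < INR l * INR 'C(n, t).
Proof.
by move=> l_gt0 le_tn; apply: Rmult_lt_0_compat; [apply: lt_0_INR; apply/ltP | exact: INR_bin_gt0].
Qed.

Lemma bad_prob_round_of (m t a b : nat) (c : R) :
  (0 < b)%N -> (m <= t)%N -> (t <= n)%N -> (0 < l)%N -> 0 <= c ->
  INR (\sum_(b' < a.+1 | (b <= b')%N) 'C(n - m, t + b' - m) * 'C(a, b') * max_degree b')
    <= c * (INR l * INR 'C(n - m, t - m)) ->
  bad_prob t b <= bad_prob m a.+1 + bad_prob m 1 * c.
Proof.
move=> b_gt0 le_mt le_tn l_gt0 c_ge0 le_X.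
have round := INR_leq (bad_count_round a b_gt0 le_mt).
rewrite !INR_addn !INR_muln in round.
have binE : INR 'C(n, t) * INR 'C(t, m) = INR 'C(n, m) * INR 'C(n - m, t - m).
  by rewrite -!INR_muln bin_mul_bin_sub.
have l_gt0R : 0 < INR l by apply: lt_0_INR; apply/ltP.
have Cnt := INR_bin_gt0 le_tn.
have Ctm := INR_bin_gt0 le_mt.
have Cnm := INR_bin_gt0 (leq_trans le_mt le_tn).
have CND : 0 < INR 'C(n - m, t - m) by apply: INR_bin_gt0; lia.
have B1_ge0 := pos_INR (bad_count m 1).
rewrite /bad_prob; set Bt := INR (bad_count t b) in round *.
set Ba := INR (bad_count m a.+1) in round *; set B1 := INR (bad_count m 1) in round B1_ge0 *.
set X := INR (\sum_(_ < _ | _) _) in round le_X.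
set Q := INR l * INR l * INR 'C(n, m) * INR 'C(n - m, t - m).
apply: (Rmult_le_reg_r Q); first by rewrite /Q; repeat apply: Rmult_lt_0_compat.
have -> : Bt / (INR l * INR 'C(n, t)) * Q = INR l * INR 'C(t, m) * Bt.
  rewrite /Q (_ : INR l * INR l * _ * _ = INR l * INR l * (INR 'C(n, t) * INR 'C(t, m))).
    by field; lra.
  by rewrite binE; ring.
have -> : (Ba / (INR l * INR 'C(n, m)) + B1 / (INR l * INR 'C(n, m)) * c) * Q =
    INR l * INR 'C(n - m, t - m) * Ba + B1 * (c * (INR l * INR 'C(n - m, t - m))).
  by rewrite /Q; field; lra.
by apply: Rle_trans round _; apply: Rplus_le_compat_l; apply: Rmult_le_compat_l.
Qed.

Lemma bad_prob1_mono (m t : nat) : (m <= t)%N -> (t <= n)%N -> (0 < l)%N ->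
  bad_prob t 1 <= bad_prob m 1.
Proof.
move=> le_mt le_tn l_gt0.
have := @bad_prob_round_of m t 0 1 0 isT le_mt le_tn l_gt0 (Rle_refl 0).
rewrite big_pred0 => [|[[|i] lt_i1]] //; rewrite Rmult_0_r Rmult_0_l Rplus_0_r.
by apply; right.
Qed.

Lemma bad_prob_gt t b : (k < b)%N -> bad_prob t b = 0.
Proof. by move=> lt_kb; rewrite /bad_prob bad_count_gt //= /Rdiv Rmult_0_l. Qed.

Lemma bad_prob_le1 t b : (0 < l)%N -> (t <= n)%N -> bad_prob t b <= 1.
Proof.
move=> l_gt0 le_tn; have denom_gt0 := bad_prob_denom_gt0 l_gt0 le_tn.
rewrite /bad_prob -(Rdiv_diag (INR l * INR 'C(n, t))); last exact: Rgt_not_eq.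
apply: Rmult_le_compat_r; first exact/Rlt_le/Rinv_0_lt_compat.
by rewrite -INR_muln mulnC; apply: INR_leq; apply: bad_count_le.
Qed.

Lemma bad_prob_le_indicator t b : (0 < l)%N -> (t <= n)%N ->
  bad_prob t b <= if (b <= k)%N then 1 else 0.
Proof.
move=> l_gt0 le_tn; case: leqP => [_ | lt_kb]; first exact: bad_prob_le1.
by rewrite bad_prob_gt //; right.
Qed.

Lemma expected_chi_le s : (0 < l)%N -> (s <= n)%N -> expected_chi S s <= INR k * bad_prob s 1.
Proof.
move=> l_gt0 le_sn; rewrite /expected_chi /bad_prob /Rdiv -Rmult_assoc -(INR_muln k).
apply: Rmult_le_compat_r; last by apply: INR_leq; apply: sum_card_chi.
exact/Rlt_le/Rinv_0_lt_compat/bad_prob_denom_gt0.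
Qed.

Lemma prob_covered_eq s : (0 < l)%N -> (s <= n)%N -> prob_covered S s = 1 - bad_prob s 1.
Proof.
move=> l_gt0 le_sn; have Cns_gt0 := INR_bin_gt0 le_sn.
have l_gt0R : 0 < INR l by apply: lt_0_INR; apply/ltP.
have := f_equal INR (card_covered_uncovered s); rewrite INR_addn => split_card.
rewrite /prob_covered /bad_prob bad_count1 INR_muln.
set Cv := INR #|_| in split_card *; set U := INR #|_| in split_card *.
have -> : Cv = INR 'C(n, s) - U by lra.
by field; lra.
Qed.
End Probabilities.

Section Spread.
Local Open Scope R_scope.
Variable r : R.
Hypothesis S_spread : spread k r S.
Hypothesis r_gt0 : 0 < r.
Hypothesis l_large : r ^ k <= INR l.

Lemma max_degree_le (b : nat) : (0 < b)%N -> INR (max_degree b) <= INR l / r ^ b.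
Proof.
move=> b_gt0; have rb_gt0 : 0 < r ^ b by apply: pow_lt.
apply: INR_bigmax_le => [|Z /eqP cardZ].
  by apply: Rle_mult_inv_pos => //; apply: pos_INR.
case: (leqP b k) => [le_bk | lt_kb]; last first.
  rewrite (_ : #|_| = 0%N); first by apply: Rle_mult_inv_pos => //; apply: pos_INR.
  apply/eqP; rewrite cards_eq0; apply/eqP/setP => x; rewrite !inE.
  by apply/negbTE/negP => /subset_leq_card; rewrite cardZ S_card; lia.
have Z_neq0 : Z != set0 by rewrite -card_gt0 cardZ.
apply: Rle_trans (S_spread Z_neq0) _; rewrite cardZ.
apply: (Rmult_le_reg_r (r ^ b)) => //.
rewrite /Rdiv Rmult_assoc Rinv_l ?Rmult_1_r; last exact: Rgt_not_eq.
have -> : r ^ (k - b) * r ^ b = r ^ k by rewrite -pow_add; congr (r ^ _); lia.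
exact: l_large.
Qed.
Lemma bin_max_degree_le (N D b : nat) : (0 < b)%N ->
  INR ('C(N, D + b) * max_degree b) <= INR l * INR 'C(N, D) * (INR N / (INR (D + 1) * r)) ^ b.
Proof.
move=> b_gt0; have rb_gt0 : 0 < r ^ b by apply: pow_lt.
have D1_gt0 : 0 < INR (D + 1) by apply: lt_0_INR; lia.
rewrite INR_muln.
apply: Rle_trans (Rmult_le_compat _ _ _ _ (pos_INR _) (pos_INR _)
                    (bin_shift_le N D b) (max_degree_le b_gt0)) _.
rewrite /Rdiv Rinv_mult -Rmult_assoc !Rpow_mult_distr !pow_inv.
by right; ring.
Qed.

Lemma encoding_sum_le (m t a b : nat) : (0 < b)%N -> (m <= t)%N ->
  let lam := INR n / (INR (t - m + 1) * r) in lam <= 1 ->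
  INR (\sum_(b' < a.+1 | (b <= b')%N) 'C(n - m, t + b' - m) * 'C(a, b') * max_degree b')
    <= 2 ^ a * lam ^ b * (INR l * INR 'C(n - m, t - m)).
Proof.
move=> b_gt0 le_mt lam lam_le1.
have lam_ge0 : 0 <= lam.
  by apply: Rle_mult_inv_pos; [apply: pos_INR | apply: Rmult_lt_0_compat => //; apply: lt_0_INR; lia].
rewrite (eq_bigr (fun b' : 'I_a.+1 => 'C(a, b') * ('C(n - m, t - m + b') * max_degree b'))%N);
  last by move=> b' _; rewrite mulnAC mulnC (_ : (t + b' - m = t - m + b')%N) //; lia.
apply: Rle_trans (INR_leq (sum_bin_le_max _ _)) _.
rewrite INR_muln INR_expn Rmult_assoc (_ : INR 2 = 2) //.
apply: Rmult_le_compat_l; first by apply: pow_le; lra.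
apply: INR_bigmax_le => [|b' le_bb'].
  by apply: Rmult_le_pos; [apply: pow_le | apply: Rmult_le_pos; apply: pos_INR].
apply: Rle_trans (bin_max_degree_le _ _ (leq_trans b_gt0 le_bb')) _.
rewrite Rmult_comm; apply: Rmult_le_compat_r.
  by apply: Rmult_le_pos; apply: pos_INR.
apply: Rle_trans _ (pow_le1_decr (conj lam_ge0 lam_le1) le_bb').
apply: pow_incr; split.
  by apply: Rle_mult_inv_pos; [apply: pos_INR | apply: Rmult_lt_0_compat => //; apply: lt_0_INR; lia].
apply: Rmult_le_compat_r; last by apply: INR_leq; apply: leq_subr.
by apply: Rlt_le; apply: Rinv_0_lt_compat; apply: Rmult_lt_0_compat => //; apply: lt_0_INR; lia.
Qed.

Lemma bad_prob_round (m t a b : nat) :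
  (0 < b)%N -> (m <= t)%N -> (t <= n)%N -> (0 < l)%N ->
  let lam := INR n / (INR (t - m + 1) * r) in lam <= 1 ->
  bad_prob t b <= bad_prob m a.+1 + bad_prob m 1 * (2 ^ a * lam ^ b).
Proof.
move=> b_gt0 le_mt le_tn l_gt0 lam lam_le1.
apply: bad_prob_round_of => //; last exact: encoding_sum_le.
apply: Rmult_le_pos; first by apply: pow_le; lra.
apply: pow_le; apply: Rle_mult_inv_pos; first exact: pos_INR.
by apply: Rmult_lt_0_compat => //; apply: lt_0_INR; lia.
Qed.


(* Each round adds d elements and multiplies the threshold b by 4 (a = 4b - 1 in
   [bad_prob_round]), so the indicator term vanishes once 4^j > k. *)
Lemma bad_prob_iter (d R0 : nat) (al : R) : (0 < l)%N -> (R0 * d <= n)%N -> 0 <= al <= 1/2 ->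
  INR n / (INR (d + 1) * r) <= al / 64 ->
  forall j, (j <= R0)%N -> forall b, (0 < b)%N ->
  bad_prob (j * d)%N b <= (if (4 ^ j * b <= k)%N then 1 else 0) + al ^ b * (2 * INR k / 2 ^ j).
Proof.
move=> l_gt0 le_R0d_n al01 lam_le.
have lam_ge0 : 0 <= INR n / (INR (d + 1) * r).
  by apply: Rle_mult_inv_pos; [apply: pos_INR | apply: Rmult_lt_0_compat => //; apply: lt_0_INR; lia].
have k_ge0 := pos_INR k.
elim=> [|j IH] le_jR0 b b_gt0.
  rewrite mul0n expn0 mul1n; apply: Rle_trans (bad_prob_le_indicator b l_gt0 (leq0n n)) _.
  by rewrite -[X in X <= _]Rplus_0_r; apply: Rplus_le_compat_l;
    apply: Rmult_le_pos; [apply: pow_le; lra | rewrite /=; lra].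
have le_tn : (j.+1 * d <= n)%N by apply: leq_trans le_R0d_n; apply: leq_mul.
have le_mt : (j * d <= j.+1 * d)%N by apply: leq_mul.
have := bad_prob_round (4 * b).-1 b_gt0 le_mt le_tn l_gt0.
rewrite (_ : (j.+1 * d - j * d = d)%N) ?prednK ?muln_gt0 //; last by rewrite mulSn addnK.
set lam := INR n / (INR (d + 1) * r) in lam_le lam_ge0 *.
move=> /(_ ltac:(lra)) round.
have IH4 := IH (ltnW le_jR0) (4 * b)%N (leq_trans b_gt0 (leq_pmull b (isT : (0 < 4)%N))).
have IH1 := IH (ltnW le_jR0) 1%N isT; rewrite pow_1 in IH1.
set c := 2 * INR k / 2 ^ j in IH4 IH1.
have c_ge0 : 0 <= c by apply: Rle_mult_inv_pos; [lra | apply: pow_lt; lra].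
have -> : 2 * INR k / 2 ^ j.+1 = c / 2 by rewrite /c /=; field; apply: pow_nonzero; lra.
have w_le := round_weight_le (conj lam_ge0 lam_le) b_gt0.
set w := 2 ^ (4 * b).-1 * lam ^ b in round w_le.
have w_ge0 : 0 <= w by apply: Rmult_le_pos; apply: pow_le; lra.
set A := al ^ b in w_le *.
have A01 : 0 <= A <= al.
  by split; [apply: pow_le; lra | rewrite /A -{2}(pow_1 al); apply: pow_le1_decr => //; lra].
rewrite (_ : al ^ (4 * b) = A ^ 4) in IH4; last by rewrite /A mulnC pow_mult.
rewrite expnSr -mulnA.
set I4 := if _ then _ else _ in IH4 *; set I1 := if _ then _ else _ in IH1.
have I1_cases : I1 = 0 \/ (I1 = 1 /\ 2 <= c).
  by rewrite /I1 muln1; case: ifP => [/half_pow_ge2 | _]; [right | left].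
apply: Rle_trans round _.
apply: Rle_trans (_ : I4 + A ^ 4 * c + (I1 + al * c) * w <= _); last first.
  by rewrite (_ : A * (c / 2) = A * c / 2); [apply: round_arith => //; lra | field].
by apply: Rplus_le_compat => //; apply: Rmult_le_compat_r.
Qed.
End Spread.
End Residues.

Section LogRatio.
Local Open Scope R_scope.
Variables (k : nat) (eps : R).
Hypotheses (k_ge1 : (1 <= k)%N) (eps01 : 0 < eps < 1/2).

Lemma log2_ratio_gt1 : 1 < log2 (INR k / eps).
Proof.
have k_ge1R : 1 <= INR k by apply: (INR_leq k_ge1).
have ln2_gt0 : 0 < ln 2 by rewrite -ln_1; apply: ln_increasing; lra.
rewrite /log2; apply: (Rmult_lt_reg_r (ln 2)) => //.
rewrite /Rdiv Rmult_assoc Rinv_l ?Rmult_1_r ?Rmult_1_l; last lra.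
apply: ln_increasing; first lra.
by apply: (Rmult_lt_reg_r eps); [lra | rewrite Rmult_assoc Rinv_l; lra].
Qed.

Lemma sq_lt_eps_pow2 (R0 : nat) : 2 * log2 (INR k / eps) < INR R0 -> INR k * INR k < eps * 2 ^ R0.
Proof.
move=> R0_gt.
have k_ge1R : 1 <= INR k by apply: (INR_leq k_ge1).
have ln2_gt0 : 0 < ln 2 by rewrite -ln_1; apply: ln_increasing; lra.
set K := INR k / eps.
have K_ge : INR k <= K.
  by rewrite /K; apply: (Rmult_le_reg_r eps); [lra | rewrite /Rdiv Rmult_assoc Rinv_l; nra].
have K2_lt : K ^ 2 < 2 ^ R0.
  apply: ln_lt_inv; [apply: pow_lt; lra | apply: pow_lt; lra |].
  rewrite !ln_pow; try lra.
  have -> : INR 2 * ln K = 2 * log2 K * ln 2 by rewrite /log2 /=; field; lra.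
  exact: Rmult_lt_compat_r.
have -> : INR k * INR k = eps * (K * INR k) by rewrite /K; field; lra.
apply: Rmult_lt_compat_l; first lra.
by apply: Rle_lt_trans K2_lt; rewrite /= Rmult_1_r; apply: Rmult_le_compat_l; lra.
Qed.
End LogRatio.

Lemma bad_prob1_lt (n l k s : nat) (S : 'I_l -> {set 'I_n}) (gamma eps r : R) :
  (1 <= k)%N -> (0 < gamma)%R -> (0 < eps < 1/2)%R -> (0 < l)%N -> (0 < r)%R ->
  (gamma * r = 512 * log2 (INR k / eps))%R ->
  spread k r S -> uniform_k k S -> (r ^ k <= INR l)%R ->
  (gamma * INR n <= INR s)%R -> (s <= n)%N ->
  (bad_prob S s 1 < eps / INR k)%R.
Proof.
move=> k_ge1 gamma_gt0 eps01 l_gt0 r_gt0 gamma_r S_spread S_card l_large gamma_s le_sn.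
have L_gt1 := log2_ratio_gt1 k_ge1 eps01; set L := log2 _ in L_gt1 gamma_r.
have [R0 [R0_gt R0_le]] := @exists_nat_between (2 * L) ltac:(lra).
have R0_gt0 : (0 < R0)%N by apply/ltP; apply: INR_lt; rewrite /=; lra.
set d := (s %/ R0)%N; set al := (INR R0 / (8 * L))%R.
have le_R0d_s : (R0 * d <= s)%N by rewrite mulnC; apply: leq_divM.
have al01 : (0 <= al <= 1/2)%R.
  by split; [apply: Rle_mult_inv_pos; [apply: pos_INR | lra] | apply: Rdiv_le_cross; lra].
have lam_le : (INR n / (INR (d + 1) * r) <= al / 64)%R.
  have -> : (al / 64 = INR R0 / (gamma * r))%R by rewrite /al gamma_r; field; lra.
  have le_s : (INR s <= INR (d + 1) * INR R0)%R.
    by rewrite -INR_muln addn1; apply/INR_leq/ltnW/ltn_ceil.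
  apply: Rdiv_le_cross; [apply: Rmult_lt_0_compat => //; apply: lt_0_INR; lia | nra | nra].
have := bad_prob_iter S_card S_spread r_gt0 l_large l_gt0 (leq_trans le_R0d_s le_sn) al01 lam_le
  (leqnn R0) (isT : (0 < 1)%N).
have kk_lt := sq_lt_eps_pow2 k_ge1 eps01 R0_gt.
have k_ge1R : (1 <= INR k)%R by apply: (INR_leq k_ge1).
have pow2_gt0 : (0 < 2 ^ R0)%R by apply: pow_lt; lra.
have -> : (4 ^ R0 * 1 <= k)%N = false.
  apply/negbTE; rewrite -ltnNge muln1; apply/ltP/INR_lt; rewrite INR_expn.
  apply: Rlt_le_trans (_ : 2 ^ R0 <= _)%R; first nra.
  by apply: pow_incr; rewrite /=; lra.
rewrite pow_1 Rplus_0_l => iter.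
apply: Rle_lt_trans (bad_prob1_mono S le_R0d_s le_sn l_gt0) _.
apply: Rle_lt_trans iter _.
apply: (@Rle_lt_trans _ (INR k / 2 ^ R0)).
  have kp_ge0 : (0 <= INR k / 2 ^ R0)%R by apply: Rle_mult_inv_pos; lra.
  by rewrite /Rdiv in kp_ge0 *; nra.
apply: (Rmult_lt_reg_r (INR k * 2 ^ R0)); first nra.
have -> : (INR k / 2 ^ R0 * (INR k * 2 ^ R0) = INR k * INR k)%R by field; lra.
by have -> : (eps / INR k * (INR k * 2 ^ R0) = eps * 2 ^ R0)%R by field; lra.
Qed.

Theorem lemma3 :
  exists beta : R, (1 < beta)%R /\
  forall (k : nat) (gamma eps : R) (n l : nat) (S : 'I_l -> {set 'I_n}) (s : nat),
    (1 <= k)%N ->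
    (0 < gamma < 1/2)%R -> (0 < eps < 1/2)%R ->
    let r := (beta * (1 / gamma) * log2 (INR k / eps))%R in
    spread k r S ->
    uniform_k k S ->
    (r ^ k <= INR l)%R ->
    (gamma * INR n <= INR s)%R -> (s <= n)%N ->
    (expected_chi S s < eps)%R /\ (1 - eps < prob_covered S s)%R.
Proof.
exists 512%R; split; first lra.
move=> k gamma eps n l S s k_ge1 gamma01 eps01 r S_spread S_card l_large gamma_s le_sn.
have L_gt1 := log2_ratio_gt1 k_ge1 eps01.
have r_gt0 : (0 < r)%R.
  apply: Rmult_lt_0_compat; last lra.
  by apply: Rmult_lt_0_compat; [lra | apply: Rdiv_lt_0_compat; lra].
have l_gt0 : (0 < l)%N by apply/ltP/INR_lt; apply: Rlt_le_trans l_large; apply: pow_lt.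
have gamma_r : (gamma * r = 512 * log2 (INR k / eps))%R by rewrite /r; field; lra.
have small := bad_prob1_lt k_ge1 (proj1 gamma01) eps01 l_gt0 r_gt0 gamma_r
                S_spread S_card l_large gamma_s le_sn.
have k_ge1R : (1 <= INR k)%R by apply: (INR_leq k_ge1).
have eps_div_k : (eps / INR k * INR k = eps)%R by field; lra.
have eps_k_le : (eps / INR k <= eps)%R.
  have : (0 <= eps / INR k)%R by apply: Rle_mult_inv_pos; lra.
  nra.
split; last by rewrite prob_covered_eq //; lra.
apply: Rle_lt_trans (expected_chi_le S_card l_gt0 le_sn) _.
have := Rmult_lt_compat_l (INR k) _ _ ltac:(lra) small.
by rewrite (Rmult_comm (INR k) (eps / INR k)) eps_div_k.
Qed.
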